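(* Let $M$ be a real symmetric $n\times n$ matrix with induced signed graph $\Gamma=(G,\sigma)$, $G=(V,E)$. Let $\lambda_k$ be the $k$-th eigenvalue of $M$ with eigenfunction $f_k$, and suppose $\lambda_{k-1}<\lambda_k$ (if $k>1$). Then $$\mathfrak{S}(f_k)\ge k+v_l-1-n-z_l+z_r,$$ where $v_l$ is the number of leaves (vertices of degree $1$) of $G$, $z_l=|\{x: d_x=1,\ f_k(x)=0\}|$, and $z_r=|\{x: d_x=1,\ f_k(x)\ne0,\ f_k(x')=0 \text{ for the vertex } x'\sim x\}|$.
   Context: The induced signed graph of a real symmetric $n\times n$ matrix $M$ has vertices $x_1,\dots,x_n$, edge $\{x_i,x_j\}$ iff $i\ne j$ and $M_{ij}\ne0$, sign $\sigma_{x_ix_j}=-M_{ij}/|M_{ij}|$; $d_x$ denotes the degree of $x$. Eigenvalues $\lambda_1\le\cdots\le\lambda_n$ are listed with multiplicity; eigenfunctions are nonzero eigenvectors viewed as functions on $V$. A walk is $y_1,\dots,y_m$ ($m\ge2$) with consecutive vertices adjacent; an S-walk of $f$ is a walk with $f(y_j)\sigma_{y_jy_{j+1}}f(y_{j+1})>0$ for all $j$. $\mathfrak{S}(f)$ is the number of equivalence classes (strong nodal domains) of the relation on $\{x:f(x)\ne0\}$ ''$x=y$ or an S-walk connects $x$ and $y$''. *)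

From HB Require Import structures.
From mathcomp Require Import all_boot all_order all_algebra.
From mathcomp Require Import boolp reals.
Set Implicit Arguments. Unset Strict Implicit. Unset Printing Implicit Defensive.
Import Order.TTheory GRing.Theory Num.Theory.
Local Open Scope ring_scope.

Section SignedGraph.
Variables (R : realType) (n : nat) (M : 'M[R]_n).

Definition adj (x y : 'I_n) : bool := (x != y) && (M x y != 0).

Definition sgn (x y : 'I_n) : R := - M x y / `|M x y|.

Definition deg (x : 'I_n) : nat := #|[set y | adj x y]|.

Definition fv (f : 'cV[R]_n) (x : 'I_n) : R := f x 0.

Definition Sstep (f : 'cV[R]_n) (x y : 'I_n) : bool :=
  adj x y && (0 < fv f x * sgn x y * fv f y).

Definition Swalk (f : 'cV[R]_n) (p : seq 'I_n) : bool :=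
  if p is y1 :: q then (0 < size q)%N && path (Sstep f) y1 q else false.

Definition Srel (f : 'cV[R]_n) (x y : 'I_n) : Prop :=
  x = y \/ exists y1 q, [/\ Swalk f (y1 :: q), y1 = x & last y1 q = y].

Definition supp (f : 'cV[R]_n) : {set 'I_n} := [set x | fv f x != 0].

Definition Sclass (f : 'cV[R]_n) (x : 'I_n) : {set 'I_n} :=
  [set y in supp f | `[< Srel f x y >]].

Definition nSdomains (f : 'cV[R]_n) : nat :=
  #|[set Sclass f x | x in supp f]|.

Definition nleaves : nat := #|[set x | deg x == 1%N]|.

Definition zl (f : 'cV[R]_n) : nat := #|[set x | (deg x == 1%N) && (fv f x == 0)]|.

Definition zr (f : 'cV[R]_n) : nat :=
  #|[set x | [&& deg x == 1%N, fv f x != 0 &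
                 [forall y, adj x y ==> (fv f y == 0)]]]|.

End SignedGraph.

From HB Require Import structures.
From mathcomp Require Import all_boot all_order all_algebra.
From mathcomp Require Import boolp reals.
From mathcomp Require Import ring zify.
Import Order.TTheory GRing.Theory Num.Theory.
Set Implicit Arguments. Unset Strict Implicit. Unset Printing Implicit Defensive.
Local Open Scope ring_scope.

(* Call a leaf x good when f x != 0 and its edge xz is an S-edge or f z = 0.
   Writing a vector supported on the good leaves as y = g f, the ground-state
   identity 2 y (M - lam_k) y^T = sum_(x, z) - M_xz f(x) f(z) (g x - g z)^2
   shows that the form of M - lam_k is nonnegative on such vectors, whereas it
   is negative definite on the span of the eigenvectors for lam_1, ..., lam_k-1,
   which has dimension k - 1 because lam_k-1 < lam_k.  Hence
   #good + k - 1 <= n.  A leaf with f x != 0 that is not good, and a leaf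
   counted by z_r, admits no S-step and is a strong nodal domain by itself;
   as the leaves counted by z_r are good, S(f) >= v_l - z_l - #good + z_r. *)

Lemma char_poly_uconj (F : fieldType) n (V A : 'M[F]_n) :
  V \in unitmx -> char_poly (V *m A *m invmx V) = char_poly A.
Proof.
move=> Vu; rewrite /char_poly.
set V' := map_mx polyC V; set W' := map_mx polyC (invmx V).
have VW : V' *m W' = 1%:M by rewrite -map_mxM mulmxV // map_mx1.
have -> : char_poly_mx (V *m A *m invmx V) = V' *m char_poly_mx A *m W'.
  rewrite /char_poly_mx mulmxBr mulmxBl mul_mx_scalar -scalemxAl VW.
  by rewrite -!map_mxM scalemx1.
by rewrite !det_mulmx mulrAC -det_mulmx VW det1 mul1r.
Qed.

Section SymmetricMatrices.
Variable R : realFieldType.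

Lemma trmx_mul_self_eq0 m n (C : 'M[R]_(m, n)) : C^T *m C = 0 -> C = 0.
Proof.
move=> CC0; apply/matrixP => i j; rewrite mxE.
have /eqP := congr1 (fun X : 'M[R]_n => X j j) CC0; rewrite !mxE.
rewrite psumr_eq0 => [/allP /(_ i (mem_index_enum _))|k _].
  by rewrite implyTb !mxE mulf_eq0 orbb => /eqP.
by rewrite mxE -expr2 sqr_ge0.
Qed.

Lemma trmx_horner_mx n (A : 'M[R]_n.+1) (p : {poly R}) :
  (horner_mx A p)^T = horner_mx A^T p.
Proof.
elim/poly_ind: p => [|p c IHp]; first by rewrite !rmorph0 trmx0.
rewrite !rmorphD !rmorphM /= !horner_mx_X !horner_mx_C linearD /= tr_scalar_mx.
rewrite -!mulmxE trmx_mul IHp; congr (_ + _).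
exact: comm_mx_horner.
Qed.

Lemma sym_nilpotent_eq0 n (B : 'M[R]_n.+1) m : B^T = B -> B ^+ m = 0 -> B = 0.
Proof.
move=> symB; elim/ltn_ind: m => -[|[|m]] IHm Bm.
- by move/eqP: Bm; rewrite expr0 oner_eq0.
- by rewrite -[B]expr1.
apply: (IHm m.+1) => //; apply: trmx_mul_self_eq0.
have symBm : (B ^+ m.+1)^T = B ^+ m.+1.
  by have := trmx_horner_mx B 'X^(m.+1); rewrite !rmorphXn /= !horner_mx_X symB.
by rewrite symBm mulmxE -exprD addSnnS exprD Bm mulr0.
Qed.

Lemma mxminpoly_sym_dvd n (A : 'M[R]_n.+1) (s : seq R) :
  A^T = A -> char_poly A = \prod_(a <- s) ('X - a%:P) ->
  mxminpoly A %| \prod_(a <- undup s) ('X - a%:P).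
Proof.
set p := \prod_(a <- undup s) _ => symA charA; apply: mxminpoly_min.
apply: (@sym_nilpotent_eq0 _ _ (size s)); first by rewrite trmx_horner_mx symA.
have : char_poly A %| p ^+ size s.
  rewrite charA -prodr_undup_exp_count -prodrXl.
  apply: (big_ind2 (fun u v : {poly R} => u %| v)) => [|? ? ? ?|a _].
  - exact: dvdpp.
  - exact: dvdp_mul.
  - exact/dvdp_exp2l/count_size.
by rewrite -rmorphXn => /dvdpP [q ->]; rewrite rmorphM /= Cayley_Hamilton mulr0.
Qed.

Lemma sym_diagonalization n (A : 'M[R]_n.+1) (s : seq R) :
  A^T = A -> char_poly A = \prod_(a <- s) ('X - a%:P) ->
  exists P d, [/\ P \in unitmx, P *m A = diag_mx d *m P &
                  perm_eq s [seq d 0 i | i <- enum 'I_n.+1]].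
Proof.
move=> symA charA.
have [|P Pu /diagonalizable_forPex [d Ad]] := (diagonalizableP A).2.
  by exists (undup s); [exact: undup_uniq | exact: mxminpoly_sym_dvd].
exists P, d; split => //; first exact/(simmxP Pu).
apply: prod_XsubC_eq; rewrite -charA -(char_poly_uconj A Pu) -(simmxRL Pu Ad).
rewrite char_poly_trig ?diag_mx_is_trig // big_map big_enum /=.
by apply: eq_bigr => i _; rewrite mxE eqxx mulr1n.
Qed.

End SymmetricMatrices.

Section QuadraticForm.
Variable R : comNzRingType.

Definition qform n (A : 'M[R]_n) (y : 'rV[R]_n) : R := (y *m A *m y^T) 0 0.

Lemma qformE n (A : 'M[R]_n) y : qform A y = \sum_i \sum_j y 0 i * A i j * y 0 j.
Proof.
rewrite /qform mxE exchange_big /=; apply: eq_bigr => j _.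
by rewrite !mxE mulr_suml.
Qed.

Lemma qform_mulmx m n (A : 'M[R]_n) (P : 'M[R]_(m, n)) c :
  qform A (c *m P) = qform (P *m A *m P^T) c.
Proof. by rewrite /qform trmx_mul !mulmxA. Qed.

Lemma qform1E n (y : 'rV[R]_n) : qform 1%:M y = \sum_i y 0 i ^+ 2.
Proof. by rewrite /qform mulmx1 mxE; apply: eq_bigr => i _; rewrite mxE expr2. Qed.

Lemma qformB n (A B : 'M[R]_n) y : qform (A - B) y = qform A y - qform B y.
Proof. by rewrite /qform mulmxBr mulmxBl [in LHS]mxE [in X in _ + X]mxE. Qed.

Lemma qform_scalar n a (y : 'rV[R]_n) : qform a%:M y = a * qform 1%:M y.
Proof. by rewrite /qform -[a%:M]scalemx1 -scalemxAr -scalemxAl mxE. Qed.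

Lemma qform_ground_state n (A : 'M[R]_n) (f : 'cV[R]_n) lam (g : 'I_n -> R) :
  A^T = A -> A *m f = lam *: f ->
  2 * qform (A - lam%:M) (\row_i (g i * f i 0)) =
    \sum_i \sum_j - (A i j * f i 0 * f j 0) * (g i - g j) ^+ 2.
Proof.
move=> symA Af.
have Af_i i : \sum_j A i j * f j 0 = lam * f i 0.
  by have := congr1 (fun v : 'cV[R]_n => v i 0) Af; rewrite !mxE => <-.
have symA_ij i j : A j i = A i j by rewrite -[A in LHS]symA mxE.
pose S := \sum_i \sum_j g i * f i 0 * A i j * (g j * f j 0).
pose T := \sum_i \sum_j g i ^+ 2 * f i 0 * A i j * f j 0.
have TE : T = lam * \sum_i (g i * f i 0) ^+ 2.
  rewrite mulr_sumr; apply: eq_bigr => i _.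
  under eq_bigr do rewrite -mulrA.
  by rewrite -mulr_sumr Af_i; ring.
have T'E : \sum_i \sum_j g j ^+ 2 * f i 0 * A i j * f j 0 = T.
  rewrite exchange_big; apply: eq_bigr => i _; apply: eq_bigr => j _.
  by rewrite symA_ij; ring.
rewrite qformB qform_scalar qform1E qformE.
under eq_bigr do under eq_bigr do rewrite !mxE.
under [in X in _ * (_ - _ * X)]eq_bigr do rewrite mxE.
rewrite -/S -TE.
transitivity (\sum_i \sum_j (2 * (g i * f i 0 * A i j * (g j * f j 0))
   - g i ^+ 2 * f i 0 * A i j * f j 0 - g j ^+ 2 * f i 0 * A i j * f j 0)).
  under eq_bigr do rewrite !sumrB -mulr_sumr.
  by rewrite !sumrB -mulr_sumr -/S -/T T'E; ring.
by apply: eq_bigr => i _; apply: eq_bigr => j _; ring.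
Qed.

End QuadraticForm.

Lemma eigenrows_orthogonal (R : idomainType) n (A P : 'M[R]_n) (d : 'rV[R]_n) i j :
  A^T = A -> P *m A = diag_mx d *m P -> d 0 i != d 0 j -> (P *m P^T) i j = 0.
Proof.
move=> symA PA dij; set G := P *m P^T.
have XE k l : (P *m A *m P^T) k l = d 0 k * G k l.
  by rewrite PA -mulmxA mul_diag_mx mxE.
have symX : (P *m A *m P^T)^T = P *m A *m P^T by rewrite !trmx_mul trmxK symA mulmxA.
have symG : G j i = G i j by rewrite -[G in LHS]trmxK /G trmx_mul trmxK mxE.
have : (d 0 i - d 0 j) * G i j = 0.
  by rewrite mulrBl -XE -symG -XE -[in X in _ - X]symX [X in _ - X]mxE subrr.
by move/eqP; rewrite mulf_eq0 subr_eq0 (negPf dij) => /eqP.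
Qed.

Lemma qform1_gt0 (R : realFieldType) n (v : 'rV[R]_n) : v != 0 -> 0 < qform 1%:M v.
Proof.
case/rV0Pn => k vk; rewrite qform1E (bigD1 k) //= ltr_pwDl ?sumr_ge0 //.
  by rewrite lt_def sqrf_eq0 vk sqr_ge0.
by move=> i _; rewrite sqr_ge0.
Qed.

Lemma qform_lt0_eigenrows (R : rcfType) n (A P : 'M[R]_n) (d c : 'rV[R]_n) lam :
  A^T = A -> P \in unitmx -> P *m A = diag_mx d *m P -> c != 0 ->
  (forall i, c 0 i != 0 -> d 0 i < lam) -> qform (A - lam%:M) (c *m P) < 0.
Proof.
move=> symA Pu PA c_neq0 c_lt; set G := P *m P^T.
(* G i j = 0 unless d 0 i = d 0 j, so scaling c by the square roots of the
   positive numbers lam - d 0 i turns the form into - |w *m P|^2. *)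
pose w := \row_i (c 0 i * Num.sqrt (lam - d 0 i)).
have w_neq0 : w != 0.
  case/rV0Pn: c_neq0 => k ck; apply/rV0Pn; exists k.
  by rewrite mxE mulf_neq0 // gt_eqF // sqrtr_gt0 subr_gt0 c_lt.
suff -> : qform (A - lam%:M) (c *m P) = - qform G w.
  have -> : G = P *m 1%:M *m P^T by rewrite mulmx1.
  rewrite oppr_lt0 -qform_mulmx qform1_gt0 //.
  by rewrite mulmx_free_eq0 ?row_free_unit.
rewrite qform_mulmx mulmxBr mulmxBl PA mul_mx_scalar -scalemxAl -mulmxA -/G.
have orthG k l : d 0 k != d 0 l -> G k l = 0 := eigenrows_orthogonal symA PA.
clearbody G; rewrite !qformE -sumrN; apply: eq_bigr => i _; rewrite -sumrN.
apply: eq_bigr => j _; rewrite mul_diag_mx !mxE.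
have [->|ci] := eqVneq (c 0 i) 0; first by ring.
have [->|cj] := eqVneq (c 0 j) 0; first by ring.
have [dij|/orthG ->] := eqVneq (d 0 i) (d 0 j); last by ring.
have sqrt_sq : Num.sqrt (lam - d 0 i) * Num.sqrt (lam - d 0 j) = lam - d 0 i.
  by rewrite -dij -expr2 sqr_sqrtr // subr_ge0 ltW // c_lt.
transitivity (- (c 0 i * G i j * c 0 j *
                 (Num.sqrt (lam - d 0 i) * Num.sqrt (lam - d 0 j)))); last by ring.
by rewrite sqrt_sq; ring.
Qed.

Section SupportMatrix.
Variable F : fieldType.

Definition selmx n (S : {set 'I_n}) : 'M[F]_(#|S|, n) :=
  \matrix_(j, i) (i == enum_val j)%:R.

Lemma selmx_supp n (S : {set 'I_n}) (y : 'rV[F]_n) i :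
  (y <= selmx S)%MS -> y 0 i != 0 -> i \in S.
Proof.
case/submxP => a ->; apply: contraR => iS; rewrite mxE big1 // => j _.
rewrite mxE; case: eqP => [ij|]; last by rewrite mulr0.
by move: (enum_valP j); rewrite -ij (negPf iS).
Qed.

Lemma row_free_selmx n (S : {set 'I_n}) : row_free (selmx S).
Proof.
suff selK : selmx S *m (selmx S)^T = 1%:M.
  by rewrite -row_leq_rank -{1}(mxrank1 F #|S|) -selK mxrankM_maxl.
apply/matrixP => j k; rewrite !mxE (bigD1 (enum_val j)) //= big1 => [|i /negPf ij].
  by rewrite !mxE eqxx mul1r addr0 (inj_eq enum_val_inj).
by rewrite !mxE ij mul0r.
Qed.

End SupportMatrix.

Lemma card_nonneg_support_le (R : realFieldType) n (A : 'M[R]_n) (S : {set 'I_n})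
    m (B : 'M[R]_(m, n)) :
  row_free B ->
  (forall y : 'rV[R]_n, (forall i, y 0 i != 0 -> i \in S) -> 0 <= qform A y) ->
  (forall c, c != 0 -> qform A (c *m B) < 0) -> (#|S| + m <= n)%N.
Proof.
move=> freeB A_ge0 A_lt0.
suff capSB : (selmx R S :&: B)%MS = 0.
  have := mxrank_disjoint_sum capSB.
  rewrite (eqnP (row_free_selmx R S)) (eqnP freeB) => <-; exact: rank_leq_col.
apply/eqP; rewrite -submx0; apply/rV_subP => y; rewrite sub_capmx submx0.
case/andP => yS /submxP [c yE]; apply: contraT => y_neq0.
have c_neq0 : c != 0 by apply: contraNneq y_neq0 => c0; rewrite yE c0 mul0mx.
have := A_ge0 y (fun i => selmx_supp yS).
by rewrite yE => /le_lt_trans/(_ (A_lt0 c c_neq0)); rewrite ltxx.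
Qed.

Lemma count_lt_nth_gap (R : realFieldType) (s : seq R) i :
  sorted <=%R s -> (i < size s)%N -> ((0 < i)%N -> s`_i.-1 < s`_i) ->
  count (< s`_i) s = i.
Proof.
move=> s_sorted i_lt gap; apply/eqP; rewrite eqn_leq; apply/andP; split.
  by rewrite leqNgt; apply/negP => /(nth_count_lt 0 s_sorted); rewrite ltxx.
case: i i_lt gap => // i i_lt gap; rewrite ltnNge; apply/negP => cnt_le.
have := nth_count_ge 0 s_sorted (_ : (count (< s`_i.+1)%R s <= i < size s)%N).
by rewrite cnt_le ltnW // leNgt (gap isT) => /(_ isT).
Qed.

Section StrongNodalDomains.
Variables (R : realType) (n : nat) (M : 'M[R]_n) (f : 'cV[R]_n).

Lemma SstepE x z : Sstep M f x z = adj M x z && (M x z * fv f x * fv f z < 0).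
Proof.
rewrite /Sstep; case: (boolP (adj M x z)) => //= /andP [_ Mxz].
have -> : fv f x * sgn M x z * fv f z = - (M x z * fv f x * fv f z) / `|M x z|.
  by rewrite /sgn /fv; ring.
by rewrite pmulr_lgt0 ?invr_gt0 ?normr_gt0 // oppr_gt0.
Qed.

Definition good_leaves : {set 'I_n} :=
  [set x | [&& deg M x == 1%N, fv f x != 0 &
             [forall z, adj M x z ==> (fv f z != 0) ==> Sstep M f x z]]].

Lemma good_leaf_supp x : x \in good_leaves -> fv f x != 0.
Proof. by rewrite inE => /and3P []. Qed.

Lemma good_leaf_weight_le0 x z :
  x \in good_leaves -> x != z -> M x z * fv f x * fv f z <= 0.
Proof.
rewrite inE => /and3P [_ _ /forallP /(_ z) good_xz] xz.
have [->|Mxz] := eqVneq (M x z) 0; first by rewrite !mul0r.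
have [->|fz] := eqVneq (fv f z) 0; first by rewrite mulr0.
have adj_xz : adj M x z by rewrite /adj xz Mxz.
by move: good_xz; rewrite adj_xz fz SstepE adj_xz /= => /ltW.
Qed.

Lemma qform_good_leaves_ge0 lam (y : 'rV[R]_n) :
  M^T = M -> M *m f = lam *: f -> (forall i, y 0 i != 0 -> i \in good_leaves) ->
  0 <= qform (M - lam%:M) y.
Proof.
move=> symM Mf y_good; pose g i := y 0 i / fv f i.
have yE : y = \row_i (g i * f i 0).
  apply/rowP => i; rewrite mxE /g.
  have [->|/y_good/good_leaf_supp fi] := eqVneq (y 0 i) 0; first by rewrite !mul0r.
  by rewrite divfK.
have g0 i : i \notin good_leaves -> g i = 0.
  by move=> i_ng; rewrite /g (contraNeq (@y_good i) i_ng) mul0r.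
rewrite -(pmulr_rge0 _ (ltr0Sn _ 1)) yE qform_ground_state //.
apply: sumr_ge0 => i _; apply: sumr_ge0 => j _.
have [->|ij] := eqVneq i j; first by rewrite subrr expr0n mulr0.
have [ig|i_ng] := boolP (i \in good_leaves).
  by rewrite mulr_ge0 ?sqr_ge0 // oppr_ge0 good_leaf_weight_le0.
have [jg|j_ng] := boolP (j \in good_leaves); last by rewrite !g0 // subrr expr0n mulr0.
have -> : M i j * f i 0 * f j 0 = M j i * fv f j * fv f i.
  by rewrite -[M in RHS]symM mxE mulrAC.
by rewrite mulr_ge0 ?sqr_ge0 // oppr_ge0 good_leaf_weight_le0 // eq_sym.
Qed.

Definition Sisolated x : bool := (fv f x != 0) && [forall z, ~~ Sstep M f x z].

Lemma Sclass_Sisolated x : Sisolated x -> Sclass M f x = [set x].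
Proof.
case/andP => fx /forallP noS; apply/setP => y; rewrite !inE.
apply/idP/idP => [/andP [_ /asboolP [->//|[y1 [q [+ y1x _]]]]]|/eqP ->].
  by rewrite y1x; case: q => [|z q] //= /andP [step _]; move: (noS z); rewrite step.
by rewrite fx; apply/asboolP; left.
Qed.

Lemma card_Sisolated_le (X : {set 'I_n}) :
  {subset X <= Sisolated} -> (#|X| <= nSdomains M f)%N.
Proof.
move=> X_iso; rewrite -(card_in_imset (f := Sclass M f)); last first.
  by move=> x1 x2 /X_iso/Sclass_Sisolated -> /X_iso/Sclass_Sisolated -> /set1_inj.
apply/subset_leq_card/imsetS/subsetP => x /X_iso /andP [fx _].
by rewrite inE.
Qed.

Definition supp_leaves : {set 'I_n} := [set x | (deg M x == 1%N) && (fv f x != 0)].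

Definition zr_leaves : {set 'I_n} :=
  [set x | [&& deg M x == 1%N, fv f x != 0 & [forall y, adj M x y ==> (fv f y == 0)]]].

Lemma nleavesE : nleaves M = (#|supp_leaves| + zl M f)%N.
Proof.
rewrite /nleaves /zl -(cardsID [set x | fv f x != 0]); congr (_ + _)%N.
  by apply: eq_card => x; rewrite !inE.
by apply: eq_card => x; rewrite !inE negbK andbC.
Qed.

Lemma card_supp_leavesE :
  #|supp_leaves| = (#|good_leaves| + #|supp_leaves :\: good_leaves|)%N.
Proof.
rewrite -(cardsID good_leaves supp_leaves); congr (_ + _)%N.
rewrite (setIidPr _) //; apply/subsetP => x; by rewrite !inE => /and3P [-> -> _].
Qed.

Lemma leaf_adj_uniq x z z' :
  deg M x == 1%N -> adj M x z -> adj M x z' -> z = z'.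
Proof.
case/cards1P => a Nx xz xz'.
have adj_a y : adj M x y -> y = a by move=> xy; apply/set1P; rewrite -Nx inE.
by rewrite (adj_a _ xz) (adj_a _ xz').
Qed.

Lemma bad_leaf_Sisolated x : x \in supp_leaves :\: good_leaves -> Sisolated x.
Proof.
case/setDP; rewrite inE => /andP [x_leaf fx] not_good.
rewrite /Sisolated fx; apply/forallP => z; apply: contra not_good => xz_step.
have xz : adj M x z by case/andP: xz_step.
rewrite inE x_leaf fx; apply/forallP => z'; apply/implyP => xz'; apply/implyP => _.
by rewrite -(leaf_adj_uniq x_leaf xz xz').
Qed.

Lemma zr_leaf_Sisolated x : x \in zr_leaves -> Sisolated x.
Proof.
rewrite inE => /and3P [_ fx /forallP f0]; rewrite /Sisolated fx; apply/forallP => z.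
rewrite SstepE; apply/negP => /andP [xz].
by rewrite (eqP (implyP (f0 z) xz)) mulr0 ltxx.
Qed.

Lemma zr_leaves_good : zr_leaves \subset good_leaves.
Proof.
apply/subsetP => x; rewrite !inE => /and3P [-> -> /forallP f0] /=.
by apply/forallP => z; apply/implyP => xz; rewrite (implyP (f0 z) xz).
Qed.

Lemma card_bad_leaves_zr_le :
  (#|supp_leaves :\: good_leaves| + zr M f <= nSdomains M f)%N.
Proof.
rewrite -[zr M f]/#|zr_leaves| -cardsUI (_ : _ :&: _ = set0) ?cards0 ?addn0.
  apply: card_Sisolated_le => x.
  by rewrite inE => /orP [/bad_leaf_Sisolated|/zr_leaf_Sisolated].
apply/setP => x; rewrite in_setI in_setD in_set0; apply/negbTE.
by apply/negP => /andP [/andP [/negP not_good _] /(subsetP zr_leaves_good)].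
Qed.

End StrongNodalDomains.

Theorem theorem6p10 (R : realType) (n : nat) (M : 'M[R]_n) (s : seq R)
    (k : nat) (f : 'cV[R]_n) :
  M^T = M ->
  (* s = [:: lambda_1; ...; lambda_n], the eigenvalues of M with multiplicity, sorted *)
  sorted <=%R s ->
  char_poly M = \prod_(a <- s) ('X - a%:P) ->
  (0 < k <= n)%N ->
  ((1 < k)%N -> s`_(k.-2) < s`_(k.-1)) ->
  f != 0 ->
  M *m f = s`_(k.-1) *: f ->
  ((k : int) + (nleaves M : int) - 1 - (n : int) - (zl M f : int) + (zr M f : int)
     <= (nSdomains M f : int))%R.
Proof.
case: n M f => [|n] M f symM s_sorted charM /andP [k_gt0 k_le] gap _ Mf.
  by have := leq_trans k_gt0 k_le.
have [P [d [Pu PM perm_sd]]] := sym_diagonalization symM charM.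
set lam := s`_k.-1; set I := [set i | d 0 i < lam].
have cardI : #|I| = k.-1.
  have size_s : size s = n.+1 by rewrite (perm_size perm_sd) size_map size_enum_ord.
  have -> : #|I| = count (< lam) s.
    by rewrite (permP perm_sd) count_map cardsE cardE -size_filter enumT /enum_mem.
  have k_lt : (k.-1 < size s)%N by rewrite size_s prednK.
  apply: count_lt_nth_gap s_sorted k_lt _ => k1.
  by apply: gap; rewrite -(prednK k_gt0) ltnS.
have good_le : (#|good_leaves M f| + #|I| <= n.+1)%N.
  apply: (@card_nonneg_support_le _ _ (M - lam%:M) _ _ (selmx R I *m P)).
  - by rewrite /row_free mxrankMfree ?row_free_unit // (eqnP (row_free_selmx R I)).
  - by move=> y; apply: qform_good_leaves_ge0.
  move=> c c_neq0; rewrite mulmxA; apply: qform_lt0_eigenrows symM Pu PM _ _.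
    by rewrite mulmx_free_eq0 ?row_free_selmx.
  by move=> i /(selmx_supp (submxMl c _)); rewrite inE.
have := nleavesE M f; have := card_supp_leavesE M f.
have := card_bad_leaves_zr_le M f; lia.
Qed.
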